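(* Let $n \ge 2$, let $\lambda = a_1\omega_1 + a_2\omega_2 + a_3\omega_3$ with $a_1,a_2,a_3 \in \mathbb{Z}_{\ge 0}$, and let $\nu, \eta$ be dominant integral weights of $\mathfrak{sl}(2n,\mathbb{C})$ such that the shapes of $\nu$ and $\eta$ are both contained in the shape of $\lambda$ and the shape of $\eta$ is even. Then $$|\operatorname{LRS}(\lambda/\nu, \eta)| = c^{\lambda}_{\nu,\eta}.$$
   Context: $\omega_1,\dots,\omega_{2n-1}$ are the fundamental weights of $\mathfrak{sl}(2n,\mathbb{C})$. To a dominant weight $\mu = \sum b_i\omega_i$ associate its shape: the Young diagram (left- and top-justified boxes) with $b_i$ columns of length $i$, longer columns to the left. Shape containment means containment of diagrams aligned at their top-left corners. A shape is even if all its columns have even length. $l(\eta)$ denotes the length of the longest column of the shape of $\eta$. For $\nu \subseteq \lambda$, a tableau of skew shape $\lambda/\nu$ is a filling of the boxes of the shape of $\lambda$ not in the shape of $\nu$ with letters from $\{1,\dots,2n\}$; it is semi-standard if rows weakly increase left to right and columns strictly increase downward. Its word is obtained by reading rows from right to left, top row first, ignoring empty boxes. A word $w_1\cdots w_k$ is dominant if for every prefix and every $i$, the number of letters $i$ in the prefix is at least the number of letters $i+1$. $\operatorname{LR}(\lambda/\nu,\eta)$ (Littlewood–Richardson tableaux) is the set of semi-standard tableaux of skew shape $\lambda/\nu$ whose word is dominant and has weight $\eta$ (i.e. for each $i$, the number of entries equal to $i$ is the number of boxes in row $i$ of the shape of $\eta$). $\operatorname{LRS}(\lambda/\nu,\eta)$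 ($n$-symplectic Sundaram tableaux) is the subset of those in which, for each $i \in \{0,1,\dots,\tfrac12 l(\eta)\}$, the letter $2i+1$ does not appear in any row strictly below row $n+i$. The Littlewood–Richardson coefficient $c^\lambda_{\nu,\eta}$ is the multiplicity of the simple module ${\rm L}(\lambda)$ in ${\rm L}(\nu)\otimes{\rm L}(\eta)$ for $\mathfrak{sl}(2n,\mathbb{C})$ (equivalently $|\operatorname{LR}(\lambda/\nu,\eta)|$).
   Formalization: The Littlewood–Richardson coefficient $c^\lambda_{\nu,\eta}$ is defined as |LR(λ/ν,η)|, the number of Littlewood–Richardson tableaux, instead of as the multiplicity of L(λ) in L(ν)⊗L(η) for sl(2n,ℂ). The paper assumes this as well. *)

From mathcomp Require Import all_boot.
Set Implicit Arguments. Unset Strict Implicit. Unset Printing Implicit Defensive.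

(* A dominant weight mu = sum_i b_i omega_i of sl(2n) is encoded by its
   coefficient function: index j : 'I_(2n-1) stands for omega_(j+1). *)
Definition weight (n : nat) := 'I_(2 * n).-1 -> nat.

(* Length of row r (0-indexed) of the shape of mu: the number of columns
   of length >= r+1, i.e. sum of b_(j+1) over j with r <= j. *)
Definition rowlen (n : nat) (mu : weight n) (r : nat) : nat :=
  \sum_(j < (2 * n).-1 | r <= j) mu j.

Definition shape_sub (n : nat) (nu lam : weight n) : Prop :=
  forall r, rowlen nu r <= rowlen lam r.

(* Even shape: every column has even length. *)
Definition even_shape (n : nat) (mu : weight n) : Prop :=
  forall j : 'I_(2 * n).-1, mu j != 0 -> ~~ odd j.+1.

(* l(mu): length of the longest column (0 for mu = 0). *)
Definition longest_col (n : nat) (mu : weight n) : nat :=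
  \max_(j < (2 * n).-1 | mu j != 0) j.+1.

Definition inskew (n : nat) (lam nu : weight n) (r c : nat) : bool :=
  (c < rowlen lam r) && ~~ (c < rowlen nu r).

(* Fillings: a value 0 means "no entry"; values 1..2n are letters.
   Rows 0..2n-1, columns 0..lambda_1 - 1. *)
Definition tab (n : nat) (lam : weight n) :=
  {ffun 'I_(2 * n) * 'I_(rowlen lam 0) -> 'I_(2 * n).+1}.

Section Tableaux.
Variables (n : nat) (lam nu eta : weight n).

Local Notation Row := 'I_(2 * n).
Local Notation Col := 'I_(rowlen lam 0).

Definition entry (T : tab lam) (r : Row) (c : Col) : nat := T (r, c).

(* Exactly the boxes of lam/nu are filled (with letters from {1,..,2n});
   boxes of lam/nu lie in rows < 2n-1 and columns < lambda_1, so every box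
   of the skew shape is represented. *)
Definition is_skew_tab (T : tab lam) : bool :=
  [forall r : Row, forall c : Col, inskew lam nu r c == (entry T r c != 0)].

Definition semistandard (T : tab lam) : bool :=
  [forall r : Row, forall c : Col, forall c' : Col,
      [&& inskew lam nu r c, inskew lam nu r c' & c < c'] ==>
      (entry T r c <= entry T r c')] &&
  [forall r : Row, forall r' : Row, forall c : Col,
      [&& inskew lam nu r c, inskew lam nu r' c & r < r'] ==>
      (entry T r c < entry T r' c)].

Definition word (T : tab lam) : seq nat :=
  flatten [seq map (entry T r) (filter (fun c : Col => inskew lam nu r c) (rev (enum Col)))
          | r <- enum Row].

Definition dominant_word (w : seq nat) : bool :=
  [forall k : 'I_(size w).+1, forall i : Row,
     (0 < i) ==> (count_mem i.+1 (take k w) <= count_mem (i : nat) (take k w))].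

Definition has_weight (w : seq nat) : bool :=
  [forall i : Row, count_mem i.+1 w == rowlen eta i].

Definition isLR (T : tab lam) : bool :=
  [&& is_skew_tab T, semistandard T, dominant_word (word T)
    & has_weight (word T)].

(* Sundaram condition: for i in {0,..,l(eta)/2}, letter 2i+1 does not occur
   in any row strictly below row n+i (1-indexed), i.e. in 0-indexed rows
   r >= n+i.  (Only i < n matter, since rows are < 2n.) *)
Definition sundaram (T : tab lam) : bool :=
  [forall i : Row, (i <= (longest_col eta)./2) ==>
    [forall r : Row, forall c : Col,
       (n + i <= r) ==> (entry T r c != (i : nat).*2.+1)]].

Definition isLRS (T : tab lam) : bool := isLR T && sundaram T.

End Tableaux.

Definition LR_set (n : nat) (lam nu eta : weight n) : {set tab lam} :=
  [set T | isLR nu eta T].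
Definition LRS_set (n : nat) (lam nu eta : weight n) : {set tab lam} :=
  [set T | isLRS nu eta T].

(* Littlewood-Richardson coefficient, via the Littlewood-Richardson rule
   c^lam_{nu,eta} = |LR(lam/nu, eta)|. *)
Definition LRcoef (n : nat) (lam nu eta : weight n) : nat :=
  #|LR_set lam nu eta|.

(* Since [n >= 2] and the shape of [lam] has at most three rows, the only
   Sundaram constraint that can bite forbids the letter 1 in the last
   nonempty row of [lam/nu].  An even [eta] has as many 1s as 2s.  If a 1
   sat in the last nonempty row, every letter read after it would lie to its
   left in that row, hence be a 1; so all 2s of the word would precede this
   1, and the prefix just before it would contain more 2s than 1s,
   contradicting dominance.  Hence every LR tableau is a Sundaram tableau. *)

From mathcomp Require Import all_boot.
From mathcomp Require Import zify.

Lemma enum_ord_split {m : nat} (x : 'I_m) :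
  exists p1 p2, [/\ enum 'I_m = p1 ++ x :: p2,
    {in p1, forall y : 'I_m, y < x} & {in p2, forall y : 'I_m, x < y}].
Proof.
have : sorted ltn (map val (enum 'I_m)) by rewrite val_enum_ord iota_ltn_sorted.
have : x \in enum 'I_m by rewrite mem_enum.
case/splitPr=> p1 p2; rewrite map_cat /= (sorted_pairwise ltn_trans).
rewrite pairwise_cat /= => /and3P[/allrelP lt_p1x _ /andP[/allP lt_xp2 _]].
exists p1, p2; split=> // y yp.
  by apply: (lt_p1x (val y) (val x)); [apply: map_f | rewrite inE eqxx].
by apply: (lt_xp2 (val y)); apply: map_f.
Qed.

Lemma dominant_word_take {n : nat} {w : seq nat} (k i : nat) :
  dominant_word n w -> 0 < i < 2 * n -> k <= size w ->
  count_mem i.+1 (take k w) <= count_mem i (take k w).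
Proof.
move=> /forallP dom /andP[i_gt0 i_lt] k_le.
have := forallP (dom (Ordinal (k_le : k < (size w).+1))) (Ordinal i_lt).
by rewrite /= i_gt0.
Qed.

Lemma dominant_word_one_before_twos {n : nat} {P C : seq nat} :
  1 < 2 * n -> dominant_word n (P ++ 1 :: C) -> count_mem 2 C = 0 ->
  count_mem 2 (P ++ 1 :: C) < count_mem 1 (P ++ 1 :: C).
Proof.
move=> two_lt dom noC.
have le_P : size P <= size (P ++ 1 :: C) by rewrite size_cat leq_addr.
have := dominant_word_take (size P) 1 dom two_lt le_P.
by rewrite take_size_cat // !count_cat /= noC; lia.
Qed.

Lemma even_shape_rowlen01 {n : nat} {eta : weight n} :
  even_shape eta -> rowlen eta 0 = rowlen eta 1.
Proof.
move=> ev; rewrite /rowlen (bigID (fun j : 'I_(2 * n).-1 => 1 <= j)) /=.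
rewrite [X in _ + X]big1 ?addn0 // => j; rewrite -eqn0Ngt => /eqP j0.
by apply/eqP/contraT => /ev; rewrite j0.
Qed.

Lemma rowlen_eq0 n (mu : weight n) (k r : nat) :
  (forall j : 'I_(2 * n).-1, k <= j -> mu j = 0) -> k <= r -> rowlen mu r = 0.
Proof.
by move=> mu0 kr; rewrite /rowlen big1 // => j rj; apply: mu0 (leq_trans kr rj).
Qed.

Section LastRow.

Context {n : nat} {lam nu eta : weight n}.

Local Notation Row := 'I_(2 * n).
Local Notation Col := 'I_(rowlen lam 0).

Lemma skew_tab_inskew {T : tab lam} : is_skew_tab nu T ->
  forall (r : Row) (c : Col), inskew lam nu r c = (entry T r c != 0).
Proof. by move=> /forallP sk r c; apply/eqP/(forallP (sk r)). Qed.

Definition row_word (T : tab lam) (r : Row) : seq nat :=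
  map (entry T r) (filter (fun c : Col => inskew lam nu r c) (rev (enum Col))).

Lemma word_row_words (T : tab lam) :
  word nu T = flatten (map (row_word T) (enum Row)).
Proof. by []. Qed.

Lemma word_split_last_row (T : tab lam) (r : Row) (c : Col) :
  (forall r' : Row, r < r' -> forall c', ~~ inskew lam nu r' c') ->
  inskew lam nu r c ->
  exists P (cs : seq Col),
    word nu T = P ++ entry T r c :: map (entry T r) cs
    /\ all (fun c' : Col => (c' < c) && inskew lam nu r c') cs.
Proof.
move=> below_empty rc.
case: (enum_ord_split r) => p1 [p2 [enumR _ r_lt_p2]].
case: (enum_ord_split c) => q1 [q2 [enumC q1_lt _]].
pose in_row (r0 : Row) (c0 : Col) := inskew lam nu r0 c0.
exists (flatten (map (row_word T) p1) ++ map (entry T r) (filter (in_row r) (rev q2))).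
exists (filter (in_row r) (rev q1)); split.
  have rows_below (s : seq Row) :
      {in s, forall r0 : Row, r < r0} -> flatten (map (row_word T) s) = [::].
    elim: s => //= r0 s IH lt_s; rewrite IH => [|r1 r1s]; last first.
      by apply: lt_s; rewrite inE r1s orbT.
    rewrite cats0 /row_word (@eq_filter _ _ pred0) ?filter_pred0 // => c0.
    by apply/negbTE/below_empty/lt_s; rewrite inE eqxx.
  rewrite word_row_words enumR map_cat flatten_cat /= (rows_below p2) // cats0.
  by rewrite -catA /row_word enumC rev_cat rev_cons cat_rcons filter_cat /= rc map_cat.
apply/allP=> c0; rewrite mem_filter mem_rev => /andP[rc0 c0q1].
by rewrite q1_lt.
Qed.

Lemma LR_last_row_entry_neq1 (T : tab lam) (r : Row) (c : Col) :
  1 < 2 * n -> isLR nu eta T -> rowlen eta 0 = rowlen eta 1 ->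
  (forall r' : Row, r < r' -> forall c', ~~ inskew lam nu r' c') ->
  entry T r c != 1.
Proof.
move=> two_lt /and4P[sk /andP[rows_ss _] dom /forallP wt] eta01 below_empty.
apply/eqP=> T1.
have rc : inskew lam nu r c by rewrite (skew_tab_inskew sk) T1.
have [P [cs [wordE cs_left]]] := word_split_last_row T r c below_empty rc.
have no2 : count_mem 2 (map (entry T r) cs) = 0.
  apply/count_memPn/mapP=> -[c0 c0cs T2].
  have /andP[lt_c0c rc0] := allP cs_left c0 c0cs.
  have := forallP (forallP (forallP rows_ss r) c0) c.
  by rewrite rc0 rc lt_c0c T1 -T2.
rewrite wordE T1 in dom wt.
have := dominant_word_one_before_twos two_lt dom no2.
have /eqP := wt (Ordinal (ltnW two_lt)); have /eqP := wt (Ordinal two_lt).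
by rewrite /= eta01 => -> ->; rewrite ltnn.
Qed.

End LastRow.

Theorem lemma6p4 (n : nat) (a1 a2 a3 : nat) (lam nu eta : weight n) :
  2 <= n ->
  (forall j : 'I_(2 * n).-1,
     lam j = if val j == 0 then a1 else if val j == 1 then a2
             else if val j == 2 then a3 else 0) ->
  shape_sub nu lam -> shape_sub eta lam -> even_shape eta ->
  #|LRS_set lam nu eta| = LRcoef lam nu eta.
Proof.
move=> n_ge2 lamE _ _ ev.
have below3 (r : 'I_(2 * n)) c : 3 <= r -> ~~ inskew lam nu r c.
  move=> r_ge3; rewrite /inskew (@rowlen_eq0 _ lam 3) // => j j_ge3.
  by rewrite lamE; case: j j_ge3 => [[|[|[|k]]] ?].
apply: eq_card => T; rewrite !inE /isLRS.
case LR_T: (isLR nu eta T) => //=.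
apply/forallP=> i; apply/implyP=> _; apply/forallP=> r; apply/forallP=> c.
apply/implyP=> r_ge; apply/eqP=> Tri.
have /and4P[sk _ _ _] := LR_T.
have [r_ge3 | r_lt3] := leqP 3 r.
  by move: (below3 r c r_ge3); rewrite (skew_tab_inskew sk) Tri.
have i0 : i = 0 :> nat by lia.
have below_r (r' : 'I_(2 * n)) : r < r' -> forall c', ~~ inskew lam nu r' c'.
  by move=> r_lt c'; apply: below3; lia.
have two_lt : 1 < 2 * n by lia.
have := LR_last_row_entry_neq1 T r c two_lt LR_T (even_shape_rowlen01 ev) below_r.
by rewrite Tri i0.
Qed.
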